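(* Let $n\ge3$ and let $A$ be a set of vertices of $C_n$ with $2\le|A|\le n$. Then the output of $\textsc{Ascending Local Search}(C_n,W,A)$ is a maximizer of $W$ on $C_n$.
   Context: $C_n$ has vertex set $\{0,\dots,n-1\}$ with $i$ adjacent to $i+1\bmod n$. $W(X)=\sum_{\{u,v\}\subseteq X,u\ne v}d(u,v)$ over unordered pairs, $d$ shortest-path distance; $X$ is a maximizer of $W$ if $W(X)=\max\{W(B):|B|=|X|\}$. A perturbation of $X$ in a graph $G$ is $(X\setminus\{u\})\cup\{v\}$ with $u\in X$, $v\in V(G)\setminus X$, $uv\in E(G)$. $\textsc{Ascending Local Search}(G,F,A)$: set $X=A$; list all perturbations of $X$ as $L(0),L(1),\dots$; if $F(L(i))>F(X)$ for some $i$, replace $X$ by $L(j)$ for the least such $j$ and repeat; otherwise return $X$. *)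

From mathcomp Require Import all_boot.
Set Implicit Arguments. Unset Strict Implicit. Unset Printing Implicit Defensive.

Section Cycle.
Variable n : nat.

Definition cadj : rel 'I_n :=
  fun u v => (nat_of_ord v == (u.+1 %% n)) || (nat_of_ord u == (v.+1 %% n)).

(* Shortest-path distance: the least k < n such that there is a walk of
   length k (a k-tuple of successive vertices) from u to v. *)
Definition walkb (k : nat) (u v : 'I_n) : bool :=
  [exists p : k.-tuple 'I_n, path cadj u p && (last u p == v)].

Definition cdist (u v : 'I_n) : nat := find (fun k => walkb k u v) (iota 0 n).

Definition W (X : {set 'I_n}) : nat :=
  \sum_(u in X) \sum_(v in X | u < v) cdist u v.

Definition is_maximizer (X : {set 'I_n}) : Prop :=
  forall B : {set 'I_n}, #|B| = #|X| -> W B <= W X.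

Definition perturbation (X Y : {set 'I_n}) : Prop :=
  exists u v : 'I_n, [/\ u \in X, v \notin X, cadj u v & Y = v |: (X :\ u)].

Definition valid_listing (lst : {set 'I_n} -> seq {set 'I_n}) : Prop :=
  forall X, uniq (lst X) /\ (forall Y, Y \in lst X <-> perturbation X Y).

(* als lst X Y : running Ascending Local Search (with listing lst) from X
   terminates and returns Y. *)
Inductive als (lst : {set 'I_n} -> seq {set 'I_n}) : {set 'I_n} -> {set 'I_n} -> Prop :=
| als_stop X : (forall Y, Y \in lst X -> W Y <= W X) -> als lst X X
| als_step X j Y :
    j < size (lst X) ->
    W X < W (nth X (lst X) j) ->
    (forall i, i < j -> W (nth X (lst X) i) <= W X) ->
    als lst (nth X (lst X) j) Y -> als lst X Y.

End Cycle.

From mathcomp Require Import all_boot zify.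
Set Implicit Arguments. Unset Strict Implicit. Unset Printing Implicit Defensive.

(* Let m = n/2 and let a_t count the points of X in the half-arc [t, t + m).
   Two vertices at distance d lie on different sides of exactly 2d of these
   half-arcs, so 2 W(X) = sum_t a_t (k - a_t) with k = |X|, while sum_t a_t = m k
   does not depend on X.  As z (k - z) is concave, W is largest when every a_t
   lies in {(k-1)/2, (k+1)/2} (rounded down).  Moving a point of X to a free
   neighbour changes just two counts, a_t and a_(t-m), by -1 and +1; at a local
   maximum this forbids a_t > a_(t-m) + 1, and an over- or under-full half-arc
   then propagates all around the cycle, contradicting sum_t a_t = m k.  Ascending
   local search stops because W strictly increases and is bounded. *)

Lemma sum_ord_lt N c : \sum_(r < N) (r < c) = minn N c.
Proof.
elim: N => [|N IHN]; first by rewrite big_ord0 min0n.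
by rewrite big_ord_recr /= IHN; case: (ltnP N c) => /=; lia.
Qed.

Lemma sum_pairs_sym n (X : {set 'I_n}) (F : 'I_n -> 'I_n -> nat) :
  (forall u v, F u v = F v u) -> (forall u, F u u = 0) ->
  2 * \sum_(u in X) \sum_(v in X | u < v) F u v = \sum_(u in X) \sum_(v in X) F u v.
Proof.
move=> F_sym F_diag.
have split_lt_gt : \sum_(u in X) \sum_(v in X) F u v =
    \sum_(u in X) \sum_(v in X | u < v) F u v + \sum_(u in X) \sum_(v in X | v < u) F u v.
  rewrite -big_split; apply: eq_bigr => u _ /=.
  rewrite big_mkcond [X in _ = X + _]big_mkcond [X in _ = _ + X]big_mkcond -big_split.
  apply: eq_bigr => v _ /=; case: (v \in X) => //=.
  by case: (ltngtP u v) => [||/val_inj ->] /=; rewrite ?addn0 ?F_diag.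
have swap : \sum_(u in X) \sum_(v in X | v < u) F u v = \sum_(u in X) \sum_(v in X | u < v) F u v.
  rewrite (exchange_big_dep (mem X)) /=; last by move=> u v _ /andP[].
  apply: eq_bigr => v Xv; apply: eq_big => [u|u _]; last exact: F_sym.
  by rewrite Xv.
by rewrite split_lt_gt swap mul2n addnn.
Qed.

Lemma sum_setU1D1 (T : finType) (X : {set T}) (F : T -> nat) u v :
  u \in X -> v \notin X -> \sum_(w in v |: (X :\ u)) F w + F u = \sum_(w in X) F w + F v.
Proof.
move=> Xu Xv; rewrite (bigD1 v) ?setU11 //= (bigD1 u Xu) /=.
rewrite [LHS]addnC addnA [RHS]addnAC; congr (_ + _); apply: eq_bigl => w.
rewrite !inE; case: (eqVneq w v) => [->|_] /=; last by rewrite andbT andbC.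
by apply/esym/negbTE/nandP; left.
Qed.

Lemma card_setU1D1 (T : finType) (X : {set T}) u v :
  u \in X -> v \notin X -> #|v |: (X :\ u)| = #|X|.
Proof.
move=> Xu Xv; rewrite cardsU1 !inE (negbTE Xv) andbF /= (cardsD1 u X) Xu.
by rewrite add1n.
Qed.

Lemma sum_shift_pair (T : finType) (A B : T -> nat) (f : nat -> nat) p q : p != q ->
  (forall t, B t + (t == p) = A t + (t == q)) ->
  \sum_t f (B t) + f (A p) + f (A q) = \sum_t f (A t) + f (B p) + f (B q).
Proof.
move=> neq_pq shift.
rewrite (bigD1 p) // (bigD1 q) /=; last by rewrite eq_sym.
rewrite [\sum_t f (A t)](bigD1 p) // (bigD1 q) /=; last by rewrite eq_sym.
have -> : \sum_(t | (t != p) && (t != q)) f (B t) = \sum_(t | (t != p) && (t != q)) f (A t).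
  apply: eq_bigr => t /andP[/negbTE neq_p /negbTE neq_q].
  by have := shift t; rewrite neq_p neq_q !addn0 => ->.
lia.
Qed.

Lemma tangent_le k lo b : lo + lo < k -> b <= k ->
  b * (k - b) + lo * (k - lo - lo - 1) <= lo * (k - lo) + b * (k - lo - lo - 1).
Proof.
move=> lt_k le_bk; have [le_lo_b|lt_b_lo] := leqP lo b; last by nia.
by rewrite -(subnKC le_lo_b); set d := b - lo; nia.
Qed.

Lemma tangent_eq k lo b : lo + lo < k -> lo <= b <= lo.+1 ->
  b * (k - b) + lo * (k - lo - lo - 1) = lo * (k - lo) + b * (k - lo - lo - 1).
Proof.
move=> lt_k /andP[le_lo le_lo1].
have [->|->] : b = lo \/ b = lo.+1 by lia.
  by [].
nia.
Qed.

Lemma exchange_gain k P Q SX SY : P < k -> Q < k -> SY <= SX ->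
  SY + P.+1 * (k - P.+1) + Q * (k - Q) = SX + P * (k - P) + Q.+1 * (k - Q.+1) -> P <= Q.
Proof. by move=> *; nia. Qed.

Lemma sum_in_eq (T : finType) (X : {set T}) w : \sum_(u in X) (u == w) = (w \in X).
Proof.
case: (boolP (w \in X)) => [Xw|notXw].
  by rewrite (bigD1 w) //= eqxx big1 // => u /andP[_ /negbTE ->].
by rewrite big1 // => u Xu; case: eqP => // eq_uw; rewrite -eq_uw Xu in notXw.
Qed.

Lemma find_iota_least (P : pred nat) N d :
  d < N -> P d -> (forall k, k < d -> ~~ P k) -> find P (iota 0 N) = d.
Proof.
move=> ltdn Pd before; have -> : N = d + (N - d).-1.+1 by lia.
rewrite iotaD find_cat size_iota /= Pd addn0.
have -> // : has P (iota 0 d) = false.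
by apply/negbTE/hasPn => k; rewrite mem_iota => /andP[_ /before].
Qed.

Section CycleOffset.
Variable n : nat.
Hypothesis n_gt0 : 0 < n.

Definition offset (t w : nat) := (w %% n + n - t %% n) %% n.

Lemma offset_lt t w : offset t w < n.
Proof. exact: ltn_pmod. Qed.

Lemma addn_offset t w : (t + offset t w) %% n = w %% n.
Proof.
rewrite /offset modnDmr -modnDml.
have := ltn_pmod t n_gt0; have := ltn_pmod w n_gt0 => ltw ltt.
have -> : t %% n + (w %% n + n - t %% n) = w %% n + n by lia.
by rewrite modnDr modn_mod.
Qed.

Lemma offset_unique t w r : r < n -> (t + r) %% n = w %% n -> offset t w = r.
Proof.
move=> ltrn; rewrite -(addn_offset t w) => /eqP.
by rewrite eqn_modDl !modn_small ?offset_lt // => /eqP.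
Qed.

Lemma offset_modl t w : offset (t %% n) w = offset t w.
Proof. by rewrite /offset modn_mod. Qed.

Lemma offset_modr t w : offset t (w %% n) = offset t w.
Proof. by rewrite /offset modn_mod. Qed.

Lemma offset_eq t w j : j < n -> (offset t w == j) = (w %% n == (t + j) %% n).
Proof.
move=> ltjn; apply/eqP/eqP => [<-|]; first by rewrite addn_offset.
by move/esym; apply: offset_unique.
Qed.

Lemma offset_id t : offset t t = 0.
Proof. by apply: offset_unique; rewrite ?addn0. Qed.

Lemma offsetSr t w : offset t w.+1 = (offset t w).+1 %% n.
Proof.
apply: offset_unique; first exact: ltn_pmod.
by rewrite modnDmr addnS -addn1 -modnDml addn_offset modnDml addn1.
Qed.

Lemma offset_trans t w v : (offset t w + offset w v) %% n = offset t v.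
Proof.
symmetry; apply: offset_unique; first exact: ltn_pmod.
by rewrite modnDmr addnA -modnDml addn_offset modnDml addn_offset.
Qed.

Lemma modSn g : g < n -> g.+1 %% n = (if g.+1 == n then 0 else g.+1).
Proof.
move=> ltgn; case: eqP => [->|neq]; first exact: modnn.
by rewrite modn_small //; lia.
Qed.

Definition ordm (i : nat) : 'I_n := Ordinal (ltn_pmod i n_gt0).

Lemma offset_ordm t w : offset t (ordm w) = offset t w.
Proof. exact: offset_modr. Qed.

Lemma ordm_ord (u : 'I_n) : ordm u = u.
Proof. by apply: val_inj; rewrite /= modn_small. Qed.

Lemma offset_eq0 (t : 'I_n) w : (offset t w == 0) = (t == ordm w).
Proof.
rewrite offset_eq // addn0 (modn_small (ltn_ord t)) eq_sym.
by apply/eqP/eqP => [eq_tw|->]; first exact: val_inj.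
Qed.

Lemma ordm_eq_offset (t : 'I_n) s j :
  j < n -> (t == ordm (s + n - j)) = (offset t s == j).
Proof.
move=> ltjn; have back : offset (s + n - j) s = j.
  by apply: offset_unique => //; rewrite subnK ?modnDr //; lia.
rewrite -offset_eq0 -(offset_trans t (s + n - j) s) back.
have := offset_lt t (s + n - j); set d := offset t _ => ltdn.
case: (ltnP (d + j) n) => [lt|ge].
  by rewrite modn_small //; apply/eqP/eqP; lia.
have -> : d + j = (d + j - n) + n by lia.
by rewrite modnDr modn_small; [apply/eqP/eqP|]; lia.
Qed.

Definition cycle_dist (u w : nat) := minn (offset u w) (n - offset u w).

Lemma cycle_dist_id (u : 'I_n) : cycle_dist u u = 0.
Proof. by rewrite /cycle_dist offset_id min0n. Qed.

Lemma cycle_dist_adj (u : nat) (w y : 'I_n) :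
  cadj w y -> cycle_dist u y <= cycle_dist u w + 1.
Proof.
rewrite /cadj /cycle_dist => /orP[]/eqP ->; rewrite offset_modr offsetSr.
  by have := offset_lt u w; set g := offset u w => ltgn; rewrite modSn //; case: eqP; lia.
by have := offset_lt u y; set g := offset u y => ltgn; rewrite modSn //; case: eqP; lia.
Qed.

Lemma cycle_dist_path (u : nat) (w : 'I_n) (p : seq 'I_n) :
  path (@cadj n) w p -> cycle_dist u (last w p) <= cycle_dist u w + size p.
Proof.
elim: p w => [|y p IHp] w /=; first by rewrite addn0.
by case/andP=> /(cycle_dist_adj u) adj /IHp; lia.
Qed.

Lemma cycle_dist_le_walk (u v : 'I_n) k : walkb k u v -> cycle_dist u v <= k.
Proof.
case/existsP=> p /andP[walk /eqP end_v].
by have := cycle_dist_path u walk; rewrite end_v cycle_dist_id size_tuple.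
Qed.

Lemma cadj_ordmS s : cadj (ordm s) (ordm s.+1) && cadj (ordm s.+1) (ordm s).
Proof.
have e : (s %% n).+1 %% n = s.+1 %% n by rewrite -addn1 modnDml addn1.
by rewrite /cadj /= e eqxx /= orbT.
Qed.

Fixpoint cw_walk (s L : nat) : seq 'I_n :=
  if L is L'.+1 then ordm s.+1 :: cw_walk s.+1 L' else [::].

Fixpoint ccw_walk (s L : nat) : seq 'I_n :=
  if L is L'.+1 then ordm (s + L') :: ccw_walk s L' else [::].

Lemma cw_walkP s L : [/\ size (cw_walk s L) = L, path (@cadj n) (ordm s) (cw_walk s L)
  & last (ordm s) (cw_walk s L) = ordm (s + L)].
Proof.
elim: L s => [|L IHL] s /=; first by rewrite addn0.
have [-> -> ->] := IHL s.+1; rewrite addSnnS.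
by case/andP: (cadj_ordmS s) => ->.
Qed.

Lemma ccw_walkP s L : [/\ size (ccw_walk s L) = L,
  path (@cadj n) (ordm (s + L)) (ccw_walk s L) & last (ordm (s + L)) (ccw_walk s L) = ordm s].
Proof.
elim: L => [|L [size_w walk end_w]] /=; first by rewrite addn0.
by rewrite size_w walk end_w addnS; case/andP: (cadj_ordmS (s + L)) => _ ->.
Qed.

Lemma walkP (u v : 'I_n) (p : seq 'I_n) :
  path (@cadj n) u p -> last u p = v -> walkb (size p) u v.
Proof.
move=> walk end_v; apply/existsP; exists (in_tuple p).
by rewrite /= walk end_v eqxx.
Qed.

Lemma walk_cycle_dist (u v : 'I_n) : walkb (cycle_dist u v) u v.
Proof.
rewrite /cycle_dist; have := offset_lt u v; set g := offset u v => ltgn.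
case: (leqP g (n - g)) => [le|lt].
  have [size_w walk end_w] := cw_walkP u g.
  rewrite ordm_ord in walk end_w; rewrite -size_w; apply: walkP walk _.
  by rewrite end_w; apply: val_inj; rewrite /= addn_offset modn_small.
have [size_w walk end_w] := ccw_walkP v (n - g).
have start : ordm (v + (n - g)) = u.
  by apply/eqP; rewrite eq_sym addnBA ?(ltnW ltgn) // ordm_eq_offset.
rewrite start in walk end_w; rewrite -size_w; apply: walkP walk _.
by rewrite end_w ordm_ord.
Qed.

Lemma cdistE (u v : 'I_n) : cdist u v = cycle_dist u v.
Proof.
apply: find_iota_least; last 1 first.
- by move=> k ltk; apply/negP => /cycle_dist_le_walk; lia.
- by rewrite /cycle_dist; have := offset_lt u v; lia.
- exact: walk_cycle_dist.
Qed.

Lemma periodic_spread (P x : nat -> bool) (b : bool) :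
  (forall t, P (t + n) = P t) ->
  (forall t, P t.+1 -> ~~ P t -> x t = b) ->
  (forall t, P t.+1 -> x t = b -> x t.+1 = b /\ P t.+2) ->
  forall q, P q -> forall s, P s.
Proof.
move=> P_per entry step q Pq s; apply/negPn/negP => notPs.
have P_mul t c : P (t + c * n) = P t.
  by elim: c => [|c IHc]; rewrite ?addn0 // mulSn addnCA addnC P_per.
have [j Psj min_j] : exists2 j, P (s + j) & forall i, P (s + i) -> j <= i.
  have ex : exists j, P (s + j).
    by exists (q + s * n - s); rewrite (_ : s + _ = q + s * n) ?P_mul //; nia.
  by case: (ex_minnP ex) => j; exists j.
case: j Psj min_j => [|j] Psj min_j; first by rewrite addn0 (negbTE notPs) in Psj.
have xb : x (s + j) = b.
  by apply: entry; [rewrite -addnS | apply/negP => /min_j; lia].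
have forward i : P (s + j.+1 + i) /\ x (s + j + i) = b.
  elim: i => [|i [IH1 IH2]]; first by rewrite !addn0.
  rewrite addnS addSn in IH1.
  by have [] := step _ IH1 IH2; rewrite !addnS !addSn.
have [] := forward (j.+1 * n - j.+1).
by rewrite (_ : s + _ + _ = s + j.+1 * n) ?P_mul ?(negbTE notPs) //; nia.
Qed.

End CycleOffset.

Definition locally_maximal n (X : {set 'I_n}) :=
  forall Y, perturbation X Y -> W Y <= W X.

Section HalfArcs.
Variable n : nat.
Hypothesis n_gt1 : 1 < n.
Let n_gt0 : 0 < n := ltnW n_gt1.
Local Notation offset := (offset n).
Local Notation cycle_dist := (cycle_dist n).
Local Notation ordm := (ordm n_gt0).
Definition arc_len := n./2.
Local Notation m := arc_len.

Lemma half_facts : [/\ 0 < m, m + m <= n & n <= m + m + 1].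
Proof.
by rewrite /arc_len; have := odd_double_half n; rewrite -addnn; case: (odd n) => /= ?; split; lia.
Qed.

Lemma sum_offsetl (F : nat -> nat) w : \sum_(t < n) F (offset t w) = \sum_(r < n) F r.
Proof.
pose h (t : 'I_n) : 'I_n := Ordinal (offset_lt n_gt0 t w).
have h_inj : injective h.
  move=> t t' /(congr1 val) /= eq_off.
  have := addn_offset n_gt0 t w; rewrite eq_off -(addn_offset n_gt0 t' w) => /eqP.
  by rewrite eqn_modDr !modn_small // => /eqP /val_inj.
by rewrite [RHS](reindex_inj h_inj).
Qed.

Lemma sum_offsetr (F : nat -> nat) t : \sum_(w < n) F (offset t w) = \sum_(r < n) F r.
Proof.
pose h (w : 'I_n) : 'I_n := Ordinal (offset_lt n_gt0 t w).
have h_inj : injective h.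
  move=> w w' /(congr1 val) /= eq_off.
  have := addn_offset n_gt0 t w; rewrite eq_off (addn_offset n_gt0) !modn_small //.
  by move/esym/val_inj.
by rewrite [RHS](reindex_inj h_inj).
Qed.

Lemma window_overlap g : g < n ->
  \sum_(r < n) ((r < m) && ((r + g) %% n < m)) = m - minn g (n - g).
Proof.
move=> ltgn; have [m_gt0 le_mn le_nm] := half_facts.
have -> : \sum_(r < n) ((r < m) && ((r + g) %% n < m))
    = \sum_(r < n | r < m) ((r + g) %% n < m).
  by rewrite [RHS]big_mkcond; apply: eq_bigr => r _; case: (r < m).
rewrite -(big_ord_widen n (fun r => ((r + g) %% n < m) : nat)); last by lia.
case: (leqP g (n - g)) => [le|lt].
  rewrite (eq_bigr (fun r : 'I_m => (r < m - g) : nat)) ?sum_ord_lt; first by lia.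
  move=> r _; have ltrm := ltn_ord r; rewrite modn_small; last by lia.
  by congr nat_of_bool; apply/idP/idP; lia.
rewrite (eq_bigr (fun r : 'I_m => 1 - (r < n - g))); last first.
  move=> r _; have ltrm := ltn_ord r.
  case: (ltnP (r + g) n) => [lt'|ge].
    by rewrite modn_small //; do 2 case: ltnP => //=; lia.
  have -> : r + g = (r + g - n) + n by lia.
  by rewrite modnDr modn_small; do 2 case: ltnP => //=; lia.
have split_m : \sum_(r < m) (1 - (r < n - g)) + \sum_(r < m) (r < n - g) = \sum_(r < m) 1.
  by rewrite -big_split; apply: eq_bigr => r _; case: (r < n - g).
move: split_m; rewrite sum_ord_lt sum1_card card_ord; set S := \sum_(r < m) _; lia.
Qed.

Lemma window_separation g : g < n ->
  \sum_(r < n) ((r < m) != ((r + g) %% n < m)) = 2 * minn g (n - g).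
Proof.
move=> ltgn; have [m_gt0 le_mn le_nm] := half_facts.
have xor_and : \sum_(r < n) ((r < m) != ((r + g) %% n < m))
    + 2 * \sum_(r < n) ((r < m) && ((r + g) %% n < m))
   = \sum_(r < n) (r < m) + \sum_(r < n) ((r + g) %% n < m).
  rewrite big_distrr -!big_split; apply: eq_bigr => r _ /=.
  by case: (r < m); case: (_ < m).
have shifted : \sum_(r < n) ((r + g) %% n < m) = m.
  have mod_offset (r : 'I_n) : (r + g) %% n = offset (n - g) r.
    symmetry; apply: offset_unique => //; first exact: ltn_pmod.
    rewrite modnDmr addnA; have -> : n - g + r + g = r + n by lia.
    by rewrite modnDr.
  rewrite (eq_bigr (fun r : 'I_n => (offset (n - g) r < m) : nat)); last first.
    by move=> r _; rewrite mod_offset.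
  by rewrite (sum_offsetr (fun r => (r < m) : nat)) sum_ord_lt; lia.
by move: xor_and; rewrite shifted sum_ord_lt window_overlap //; lia.
Qed.

(* The half-arcs containing exactly one of u and v are those starting in the
   symmetric difference of (u - m, u] and (v - m, v]. *)
Lemma double_cycle_dist (u v : 'I_n) :
  2 * cycle_dist u v = \sum_(t < n) ((offset t u < m) != (offset t v < m)).
Proof.
rewrite (eq_bigr (fun t : 'I_n =>
    (((offset t u < m) != ((offset t u + offset u v) %% n < m)) : nat))); last first.
  by move=> t _; rewrite offset_trans.
rewrite (sum_offsetl (fun r => ((r < m) != ((r + offset u v) %% n < m)) : nat)).
by rewrite window_separation // offset_lt.
Qed.

Definition arc_count (X : {set 'I_n}) (t : nat) := \sum_(u in X) (offset t u < m).

Lemma arc_count_le X t : arc_count X t <= #|X|.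
Proof. by rewrite -sum1_card; apply: leq_sum => u _; case: (_ < m). Qed.

Lemma separated_pairs (X : {set 'I_n}) (t : nat) :
  \sum_(u in X) \sum_(v in X | u < v) ((offset t u < m) != (offset t v < m))
  = arc_count X t * (#|X| - arc_count X t).
Proof.
set a := arc_count X t; set c := fun u : 'I_n => ((offset t u < m) : nat).
have sum_outside : \sum_(u in X) (1 - c u) = #|X| - a.
  suff : \sum_(u in X) (1 - c u) + a = #|X| by lia.
  by rewrite -big_split -sum1_card; apply: eq_bigr => u _; rewrite /c; case: (_ < m).
have xor_cross : \sum_(u in X) \sum_(v in X) ((offset t u < m) != (offset t v < m))
    = \sum_(u in X) \sum_(v in X) (c u * (1 - c v) + (1 - c u) * c v).
  apply: eq_bigr => u _; apply: eq_bigr => v _; rewrite /c.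
  by case: (offset t u < m); case: (offset t v < m).
have cross : \sum_(u in X) \sum_(v in X) (c u * (1 - c v) + (1 - c u) * c v)
    = 2 * (a * (#|X| - a)).
  rewrite (eq_bigr (fun u => c u * (#|X| - a) + (1 - c u) * a)); last first.
    by move=> u _; rewrite big_split /= -!big_distrr sum_outside.
  rewrite big_split /= -!big_distrl sum_outside.
  by change (a * (#|X| - a) + (#|X| - a) * a = 2 * (a * (#|X| - a))); lia.
apply/eqP; rewrite -(@eqn_pmul2l 2) // sum_pairs_sym ?xor_cross ?cross //.
- by move=> u v; case: (offset t u < m); case: (offset t v < m).
- by move=> u; case: (offset t u < m).
Qed.

Lemma double_W (X : {set 'I_n}) :
  2 * W X = \sum_(t < n) arc_count X t * (#|X| - arc_count X t).
Proof.
rewrite /W big_distrr /=.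
under eq_bigr => u _.
  rewrite big_distrr /=; under eq_bigr => v _ do rewrite (cdistE n_gt0) double_cycle_dist.
  rewrite exchange_big /=; over.
by rewrite exchange_big /=; apply: eq_bigr => t _; exact: separated_pairs.
Qed.

Lemma sum_arc_count (X : {set 'I_n}) : \sum_(t < n) arc_count X t = m * #|X|.
Proof.
have [m_gt0 le_mn _] := half_facts.
rewrite exchange_big /= -sum1_card big_distrr /=; apply: eq_bigr => u _.
by rewrite (sum_offsetl (fun r => (r < m) : nat)) sum_ord_lt muln1; lia.
Qed.

Lemma arc_count_modn X t : arc_count X (t %% n) = arc_count X t.
Proof. by apply: eq_bigr => u _; rewrite offset_modl. Qed.

Lemma arc_count_addn X t : arc_count X (t + n) = arc_count X t.
Proof. by rewrite -arc_count_modn modnDr arc_count_modn. Qed.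

Lemma arc_count_ordm X t : arc_count X (ordm t) = arc_count X t.
Proof. exact: arc_count_modn. Qed.

Lemma lt_arc_lenS r : r < n ->
  (r.+1 %% n < m) + (r.+1 %% n == m) = (r < m) + (r.+1 %% n == 0) :> nat.
Proof.
move=> ltrn; have [m_gt0 le_mn le_nm] := half_facts.
rewrite modSn //; case: eqP => [eq_rn|_]; last by case: (ltngtP r.+1 m).
have -> : (r < m) = false by apply/negbTE; lia.
by rewrite m_gt0 eq_sym (negbTE (lt0n_neq0 m_gt0)).
Qed.

(* Sliding the half-arc one step drops [t] and picks up [t + m]. *)
Lemma arc_countS X t :
  arc_count X t.+1 + (ordm t \in X) = arc_count X t + (ordm (t + m) \in X).
Proof.
have [m_gt0 le_mn le_nm] := half_facts.
rewrite -!sum_in_eq /arc_count -!big_split /=; apply: eq_bigr => u _.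
have at_t : (u == ordm t) = (offset t u == 0).
  by rewrite (offset_eq n_gt0) // addn0 modn_small //; apply/eqP/eqP => [->|?] //; exact: val_inj.
have at_tm : (u == ordm (t + m)) = (offset t u == m).
  rewrite (offset_eq n_gt0); last by lia.
  by rewrite modn_small //; apply/eqP/eqP => [->|?] //; exact: val_inj.
have step : offset t u = (offset t.+1 u).+1 %% n.
  rewrite -(offset_trans n_gt0 t t.+1 u) (_ : offset t t.+1 = 1) ?add1n //.
  by apply: offset_unique; rewrite ?addn1.
by rewrite at_t at_tm step; have := lt_arc_lenS (offset_lt n_gt0 t.+1 u); lia.
Qed.

Lemma offset_antipode t u : offset t u = (m + offset (t + m) u) %% n.
Proof.
have [m_gt0 le_mn le_nm] := half_facts.
rewrite -(offset_trans n_gt0 t (t + m) u); congr (_ %% n); congr (_ + _).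
by apply: offset_unique => //; lia.
Qed.

Lemma arc_count_antipode_le (X : {set 'I_n}) t : arc_count X t + arc_count X (t + m) <= #|X|.
Proof.
have [m_gt0 le_mn le_nm] := half_facts.
rewrite -big_split -sum1_card; apply: leq_sum => u _ /=; rewrite offset_antipode.
have := offset_lt n_gt0 (t + m) u; set r := offset (t + m) u => ltrn.
case: (ltnP r m) => [ltrm|]; last by case: (_ < m).
by rewrite modn_small; [case: ltnP | ]; lia.
Qed.

(* The two half-arcs miss at most the point [t + 2m], which exists when n is odd. *)
Lemma arc_count_antipode_ge (X : {set 'I_n}) t : #|X| <= arc_count X t + arc_count X (t + m) + 1.
Proof.
have [m_gt0 le_mn le_nm] := half_facts.
apply: (@leq_trans (arc_count X t + arc_count X (t + m) + (ordm (t + m + m) \in X)));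
  last by rewrite leq_add2l; case: (_ \in X).
rewrite -sum_in_eq -!big_split -sum1_card; apply: leq_sum => u _ /=.
have -> : (u == ordm (t + m + m)) = (offset (t + m) u == m).
  by rewrite (offset_eq n_gt0) ?(modn_small (ltn_ord u)) //; lia.
rewrite offset_antipode; have := offset_lt n_gt0 (t + m) u; set r := offset (t + m) u => ltrn.
case: (ltnP (m + r) n) => [lt|ge].
  by rewrite modn_small //; do 2 case: ltnP => //; case: eqP => //; lia.
have -> : m + r = (m + r - n) + n by lia.
by rewrite modnDr modn_small; [do 2 case: ltnP => //; lia | lia].
Qed.

Lemma arc_count_setU1D1 (X : {set 'I_n}) (u v : 'I_n) t : u \in X -> v \notin X ->
  arc_count (v |: (X :\ u)) t + (offset t u < m) = arc_count X t + (offset t v < m).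
Proof. exact: sum_setU1D1. Qed.

Lemma lt_arc_len_offsetS (t : 'I_n) s :
  (offset t s.+1 < m) + (t == ordm (s.+1 + n - m)) = (offset t s < m) + (t == ordm s.+1) :> nat.
Proof.
have [m_gt0 le_mn le_nm] := half_facts.
rewrite ordm_eq_offset; last by lia.
by rewrite -offset_eq0 offsetSr //; exact: lt_arc_lenS (offset_lt n_gt0 t s).
Qed.

Lemma ordmS_neq_antipode s : ordm s.+1 != ordm (s.+1 + n - m).
Proof.
have [m_gt0 le_mn le_nm] := half_facts.
rewrite ordm_eq_offset; last by lia.
by rewrite offset_modl (offset_id n_gt0) eq_sym -lt0n.
Qed.

(* Only the counts at [p] and [q] change, by -1 and +1; by concavity of
   z (k - z) this strictly increases W when a_p exceeds a_q + 1. *)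
Lemma exchange_arc_counts (X Y : {set 'I_n}) (p q : 'I_n) :
  p != q -> #|Y| = #|X| -> W Y <= W X ->
  (forall t : 'I_n, arc_count Y t + (t == p) = arc_count X t + (t == q)) ->
  arc_count X p <= (arc_count X q).+1.
Proof.
move=> neq_pq card_YX le_W shift; set k := #|X|.
have := shift p; have := shift q.
rewrite !eqxx (negbTE neq_pq) eq_sym (negbTE neq_pq) /= !addn0 !addn1 => shift_q shift_p.
have WX := double_W X; have WY := double_W Y; rewrite card_YX -/k in WY.
have := sum_shift_pair (fun z => z * (k - z)) neq_pq shift.
rewrite -WX -WY shift_q -shift_p ltnS => gain.
apply: (exchange_gain _ _ _ gain); rewrite ?leq_mul2l //.
- by rewrite shift_p arc_count_le.
- by have := arc_count_le Y q; rewrite shift_q card_YX.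
Qed.

Lemma locally_maximal_left X s : locally_maximal X ->
  ordm s.+1 \in X -> ordm s \notin X -> arc_count X s.+1 <= (arc_count X (s.+1 + n - m)).+1.
Proof.
move=> loc_X Xu Xv.
rewrite -[arc_count X s.+1]arc_count_ordm -[arc_count X (s.+1 + n - m)]arc_count_ordm.
apply: (exchange_arc_counts (Y := ordm s |: (X :\ ordm s.+1))).
- exact: ordmS_neq_antipode.
- exact: card_setU1D1.
- apply: loc_X; exists (ordm s.+1), (ordm s).
  by split=> //; case/andP: (cadj_ordmS n_gt0 s).
- move=> t; have := arc_count_setU1D1 t Xu Xv; have := lt_arc_len_offsetS t s.
  by rewrite !offset_ordm; lia.
Qed.

Lemma locally_maximal_right X s : locally_maximal X ->
  ordm s \in X -> ordm s.+1 \notin X -> arc_count X (s.+1 + n - m) <= (arc_count X s.+1).+1.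
Proof.
move=> loc_X Xu Xv.
rewrite -[arc_count X s.+1]arc_count_ordm -[arc_count X (s.+1 + n - m)]arc_count_ordm.
apply: (exchange_arc_counts (Y := ordm s.+1 |: (X :\ ordm s))).
- by rewrite eq_sym ordmS_neq_antipode.
- exact: card_setU1D1.
- apply: loc_X; exists (ordm s), (ordm s.+1).
  by split=> //; case/andP: (cadj_ordmS n_gt0 s).
- move=> t; have := arc_count_setU1D1 t Xu Xv; have := lt_arc_len_offsetS t s.
  by rewrite !offset_ordm; lia.
Qed.

Lemma arc_count_antipodeS (X : {set 'I_n}) s :
  arc_count X (s.+1 + n - m) + arc_count X s.+1 <= #|X|
  <= arc_count X (s.+1 + n - m) + arc_count X s.+1 + 1.
Proof.
have [m_gt0 le_mn _] := half_facts.
have -> : arc_count X s.+1 = arc_count X (s.+1 + n - m + m).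
  by rewrite -arc_count_addn; congr arc_count; lia.
by rewrite arc_count_antipode_le arc_count_antipode_ge.
Qed.

(* An over-full half-arc can only start right after a point outside X, and a
   local maximum keeps the next point outside X, so every half-arc would be
   over-full. *)
Lemma locally_maximal_arc_count_le X t :
  locally_maximal X -> arc_count X t <= #|X|.+1./2.
Proof.
move=> loc_X; set hi := #|X|.+1./2.
have [m_gt0 le_mn _] := half_facts.
have hi_half : #|X| <= hi + hi by rewrite /hi; have := odd_double_half #|X|.+1; lia.
apply/negP => /negP; rewrite -ltnNge => lt_hi.
have entry s : hi < arc_count X s.+1 -> ~~ (hi < arc_count X s) -> (ordm s \in X) = false.
  by have := arc_countS X s; case: (_ \in X); case: (_ \in X) => /=; lia.
have step s : hi < arc_count X s.+1 -> (ordm s \in X) = false ->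
    (ordm s.+1 \in X) = false /\ hi < arc_count X s.+2.
  move=> lt_s1 notXs; have notXs1 : (ordm s.+1 \in X) = false.
    apply/negP => Xs1; have := locally_maximal_left loc_X Xs1 (negbT notXs).
    by have := arc_count_antipodeS X s; lia.
  by split=> //; have := arc_countS X s.+1; rewrite notXs1; case: (_ \in X) => /=; lia.
have all_hi s : hi < arc_count X s.
  by apply: (periodic_spread n_gt0 _ entry step lt_hi) => u; rewrite arc_count_addn.
have : \sum_(t < n) hi.+1 <= \sum_(t < n) arc_count X t by apply: leq_sum.
by rewrite sum_arc_count sum_nat_const card_ord; nia.
Qed.

Lemma locally_maximal_arc_count_ge X t :
  locally_maximal X -> #|X|.-1./2 <= arc_count X t.
Proof.
move=> loc_X; set lo := #|X|.-1./2.
have [m_gt0 le_mn le_nm] := half_facts.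
have lo_half : lo + lo <= #|X| by rewrite /lo; have := odd_double_half #|X|.-1; lia.
apply/negP => /negP; rewrite -ltnNge => lt_lo.
have entry s : arc_count X s.+1 < lo -> ~~ (arc_count X s < lo) -> (ordm s \in X) = true.
  by have := arc_countS X s; case: (_ \in X); case: (_ \in X) => /=; lia.
have step s : arc_count X s.+1 < lo -> (ordm s \in X) = true ->
    (ordm s.+1 \in X) = true /\ arc_count X s.+2 < lo.
  move=> lt_s1 Xs; have Xs1 : (ordm s.+1 \in X) = true.
    apply/negbNE/negP => notXs1; have := locally_maximal_right loc_X Xs notXs1.
    by have := arc_count_antipodeS X s; lia.
  by split=> //; have := arc_countS X s.+1; rewrite Xs1; case: (_ \in X) => /=; lia.
have all_lo s : arc_count X s < lo.
  by apply: (periodic_spread n_gt0 _ entry step lt_lo) => u; rewrite arc_count_addn.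
have : \sum_(t < n) (arc_count X t).+1 <= \sum_(t < n) lo by apply: leq_sum.
under eq_bigr do rewrite -addn1.
have le_kn : #|X| <= n by have := max_card X; rewrite card_ord.
by rewrite big_split /= sum_arc_count !sum_nat_const !card_ord; nia.
Qed.

(* At integers, z (k - z) lies below the line through its values at (k-1)/2
   and (k+1)/2 (rounded down), with equality exactly at these two points. *)
Lemma balanced_is_maximizer (X : {set 'I_n}) :
  (forall t, #|X|.-1./2 <= arc_count X t <= #|X|.+1./2) -> is_maximizer X.
Proof.
move=> balanced B card_B; set k := #|X|.
have [k0|k_gt0] := posnP k; first by rewrite (cards0_eq (etrans card_B k0)) /W big_set0.
set lo := k.-1./2; set c := k - lo - lo - 1.
have lo_lt : lo + lo < k by rewrite /lo; have := odd_double_half k.-1; lia.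
have hi_lo : k.+1./2 = lo.+1 by rewrite /lo; have := odd_double_half k.-1;
  have := odd_double_half k.+1; case: (odd _); case: (odd _) => /=; lia.
have le_B : \sum_(t < n) (arc_count B t * (k - arc_count B t) + lo * c)
    <= \sum_(t < n) (lo * (k - lo) + arc_count B t * c).
  by apply: leq_sum => t _; apply: tangent_le => //; have := arc_count_le B t; rewrite card_B.
have eq_X : \sum_(t < n) (arc_count X t * (k - arc_count X t) + lo * c)
    = \sum_(t < n) (lo * (k - lo) + arc_count X t * c).
  by apply: eq_bigr => t _; apply: tangent_eq; rewrite // -hi_lo balanced.
move: le_B eq_X; rewrite !big_split /= -!big_distrl !sum_arc_count card_B.
have := double_W B; have := double_W X; rewrite card_B -/k => <- <-; lia.
Qed.

Lemma locally_maximal_is_maximizer (X : {set 'I_n}) : locally_maximal X -> is_maximizer X.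
Proof.
move=> loc_X; apply: balanced_is_maximizer => t.
by rewrite locally_maximal_arc_count_ge ?locally_maximal_arc_count_le.
Qed.

End HalfArcs.

Lemma als_exists n (lst : {set 'I_n} -> seq {set 'I_n}) X : exists Y, als lst X Y.
Proof.
set Wmax := \max_(B : {set 'I_n}) W B.
elim: {X}(Wmax - W X).+1 {-2}X (ltnSn (Wmax - W X)) => // d IHd X lt_d.
have [improves|stuck] := boolP (has (fun Y => W X < W Y) (lst X)).
  set j := find (fun Y => W X < W Y) (lst X).
  have lt_j : j < size (lst X) by rewrite -has_find.
  have better : W X < W (nth X (lst X) j) := nth_find X improves.
  have [Y ALS] : exists Y, als lst (nth X (lst X) j) Y.
    by apply: IHd; have := @leq_bigmax _ (@W n) (nth X (lst X) j); rewrite -/Wmax; lia.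
  exists Y; apply: (als_step lt_j better) => // i lt_ij.
  by rewrite leqNgt; apply/negbT; exact: (before_find X lt_ij).
exists X; apply: als_stop => Y inY; rewrite leqNgt.
exact: (hasPn stuck).
Qed.

Lemma als_locally_maximal n (lst : {set 'I_n} -> seq {set 'I_n}) X Y :
  valid_listing lst -> als lst X Y -> locally_maximal Y.
Proof.
move=> valid; elim=> // Z stop Y' perturbed; apply: stop.
by have [_ ->] := valid Z.
Qed.

Theorem mainTheorem14 (n : nat) (A : {set 'I_n})
    (lst : {set 'I_n} -> seq {set 'I_n}) :
  3 <= n -> 2 <= #|A| <= n -> valid_listing lst ->
  (exists Y, als lst A Y) /\ (forall Y, als lst A Y -> is_maximizer Y).
Proof.
move=> n_ge3 _ valid; split; first exact: als_exists.
move=> Y /(als_locally_maximal valid).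
exact: (@locally_maximal_is_maximizer n (ltnW n_ge3) Y).
Qed.
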